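(* Let $M$ be a gridding matrix and let $\mathcal{C}\subseteq\mathsf{Grid}(M)$ be a permutation class. Then the set $\mathcal{C}^\#$ of $M$-gridded permutations whose underlying permutations lie in $\mathcal{C}$ is labelled well quasi-ordered (under labelled gridded containment) if and only if $\mathcal{C}$ is labelled well quasi-ordered.
   Context: Permutations are identified with their plots; $\sigma\le\pi$ if $\pi$ has a subsequence order-isomorphic to $\sigma$; a permutation class is a containment-closed set. A gridding matrix has entries in $\{0,1,-1\}$; an $m\times n$ one has $m$ columns, $n$ rows, $M_{ij}$ in column $i$ from the left and row $j$ from the bottom. An $M$-gridding of a permutation $\pi$ of length $L$ is a choice of vertical lines $\tfrac12=v_0\le\dots\le v_m=L+\tfrac12$ and horizontal lines $\tfrac12=h_0\le\dots\le h_n=L+\tfrac12$, not through points of $\pi$, such that in each cell $C_{ij}=\{v_{i-1}<x<v_i,\ h_{j-1}<y<h_j\}$ the points of $\pi$ are absent if $M_{ij}=0$, increasing if $M_{ij}=1$, decreasing if $M_{ij}=-1$; the result is an $M$-gridded permutation. $\mathsf{Grid}(M)$ is the class of permutations having an $M$-gridding. Gridded containment: $\sigma^\#\le\pi^\#$ if some subsequence of $\pi$ order-isomorphic to $\sigma$ maps each point of $\sigma^\#$ to a point of $\pi^\#$ lying in the cell with the same index $(i,j)$. A quasi-order is wqo if every infinite sequence $x_1,x_2,\dots$ has $i<j$ with $x_i\le x_j$. For a quasi-order $L$, an $L$-labelled (gridded) permutation is a (gridded) permutation with a map from its points to $L$; $(\sigma,\ell_\sigma)\le(\pi,\ell_\pi)$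 if some (gridded) embedding of $\sigma$ into $\pi$ maps each point to one whose label is $\ge$ its own. A set of (gridded) permutations is labelled well quasi-ordered if its set of $L$-labelled elements is wqo under this order for every wqo $L$. *)

From mathcomp Require Import all_boot all_algebra.
Set Implicit Arguments. Unset Strict Implicit. Unset Printing Implicit Defensive.
Import GRing.Theory Num.Theory.

Definition is_perm (s : seq nat) : Prop := perm_eq s (iota 0 (size s)).

Definition pattern_emb (sg pi : seq nat) (f : nat -> nat) : Prop :=
  (forall x y, x < y -> y < size sg -> f x < f y) /\
  (forall x, x < size sg -> f x < size pi) /\
  (forall x y, x < size sg -> y < size sg ->
     (nth 0 sg x < nth 0 sg y) = (nth 0 pi (f x) < nth 0 pi (f y))).

Definition contained (sg pi : seq nat) : Prop := exists f, pattern_emb sg pi f.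

Definition perm_class (C : seq nat -> Prop) : Prop :=
  (forall s, C s -> is_perm s) /\
  (forall s p, C p -> is_perm s -> contained s p -> C s).

(* Grid lines are encoded by integer cut points: the vertical line v_i of the
   paper (a half-integer) is v i + 1/2 in 1-indexed coordinates, so 0-indexed
   position x lies in column i (0-indexed, i < m) iff v i <= x < v (i+1);
   similarly for values and rows. *)
Definition in_cell (v h : nat -> nat) (s : seq nat) (x i j : nat) : bool :=
  (v i <= x < v i.+1) && (h j <= nth 0 s x < h j.+1).

(* M : 'M[int]_(m, n) is read with first index = column (from the left),
   second index = row (from the bottom). *)
Definition is_gridding (m n : nat) (M : 'M[int]_(m, n)) (s : seq nat)
    (v h : nat -> nat) : Prop :=
  (v 0 = 0 /\ v m = size s /\ (forall i, i < m -> v i <= v i.+1)) /\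
  (h 0 = 0 /\ h n = size s /\ (forall j, j < n -> h j <= h j.+1)) /\
  (forall (i : 'I_m) (j : 'I_n),
     (M i j = 0%R -> forall x, x < size s -> ~~ in_cell v h s x i j) /\
     (M i j = 1%R -> forall x y, x < y -> y < size s ->
        in_cell v h s x i j -> in_cell v h s y i j ->
        nth 0 s x < nth 0 s y) /\
     (M i j = (-1)%R -> forall x y, x < y -> y < size s ->
        in_cell v h s x i j -> in_cell v h s y i j ->
        nth 0 s y < nth 0 s x)).

Definition in_Grid (m n : nat) (M : 'M[int]_(m, n)) (s : seq nat) : Prop :=
  exists v h, is_gridding M s v h.

Record gperm := GPerm { gp_perm : seq nat; gp_v : nat -> nat; gp_h : nat -> nat }.

Definition gridded_emb (m n : nat) (a b : gperm) (f : nat -> nat) : Prop :=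
  pattern_emb (gp_perm a) (gp_perm b) f /\
  forall x, x < size (gp_perm a) -> forall (i : 'I_m) (j : 'I_n),
    in_cell (gp_v a) (gp_h a) (gp_perm a) x i j ->
    in_cell (gp_v b) (gp_h b) (gp_perm b) (f x) i j.

Definition gridded_class (m n : nat) (M : 'M[int]_(m, n)) (C : seq nat -> Prop)
    (g : gperm) : Prop :=
  C (gp_perm g) /\ is_gridding M (gp_perm g) (gp_v g) (gp_h g).

Definition wqo_on (X : Type) (S : X -> Prop) (le : X -> X -> Prop) : Prop :=
  forall s : nat -> X, (forall k, S (s k)) -> exists i j, i < j /\ le (s i) (s j).

Definition quasi_order (X : Type) (le : X -> X -> Prop) : Prop :=
  (forall x, le x x) /\ (forall x y z, le x y -> le y z -> le x z).

Definition is_wqo (X : Type) (le : X -> X -> Prop) : Prop :=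
  quasi_order le /\ wqo_on (fun _ => True) le.

Definition lwqo (S : seq nat -> Prop) : Prop :=
  forall (L : Type) (leL : L -> L -> Prop), is_wqo leL ->
    wqo_on (fun p : seq nat * (nat -> L) => S p.1)
      (fun a b => exists f, pattern_emb a.1 b.1 f /\
                   forall x, x < size a.1 -> leL (a.2 x) (b.2 (f x))).

Definition lwqo_gridded (m n : nat) (S : gperm -> Prop) : Prop :=
  forall (L : Type) (leL : L -> L -> Prop), is_wqo leL ->
    wqo_on (fun p : gperm * (nat -> L) => S p.1)
      (fun a b => exists f, gridded_emb m n a.1 b.1 f /\
                   forall x, x < size (gp_perm a.1) -> leL (a.2 x) (b.2 (f x))).

(* Forgetting the grid lines turns a labelled gridded embedding into a labelled
   embedding, and every permutation of C has an M-gridding; so a bad sequence in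
   C becomes a bad gridded sequence.  Conversely, give every point of a gridded
   permutation the extra label "the cell it lies in", compared by equality.
   Since there are finitely many cells, labels in L x cells are still well
   quasi-ordered, and an embedding respecting the cell labels is a gridded
   embedding, because the cell of a point is determined by the grid lines. *)

From mathcomp Require Import all_boot all_algebra.
From Stdlib Require Import Classical ClassicalEpsilon.

Set Implicit Arguments.
Unset Strict Implicit.
Unset Printing Implicit Defensive.

Section GridIndex.

Variables (v : nat -> nat) (m : nat).

Definition grid_index (x : nat) : nat := count (fun k => v k.+1 <= x) (iota 0 m).

Lemma grid_index_le x : grid_index x <= m.
Proof. by rewrite /grid_index -[m in _ <= m](size_iota 0) count_size. Qed.

Hypotheses (v0 : v 0 = 0) (v_step : forall k, k < m -> v k <= v k.+1).

Lemma grid_lines_mono : {in [pred k | k <= m] &, {homo v : a b / a <= b}}.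
Proof.
apply: homo_leq_in => //; first exact: leq_trans.
  by move=> a b _ bm c /andP[_ /ltnW/leq_trans]; apply.
by move=> k _; rewrite inE; apply: v_step.
Qed.

Lemma grid_index_eq x i : i < m -> v i <= x < v i.+1 -> grid_index x = i.
Proof.
move=> im /andP[vix xvi]; rewrite /grid_index (@eq_in_count _ _ (fun k => k < i)).
  by rewrite -size_filter (filter_iota_ltn 0 (ltnW im)) size_iota.
move=> k; rewrite mem_iota add0n => /andP[_ km].
case: (ltnP k i) => [ki | ik].
  by apply: leq_trans vix; apply: grid_lines_mono; rewrite ?inE ?(ltnW im).
apply/negbTE; rewrite -ltnNge; apply: leq_trans xvi _.
by apply: grid_lines_mono; rewrite ?inE.
Qed.

Lemma strip_exists x : x < v m -> exists2 i, i < m & v i <= x < v i.+1.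
Proof.
suff strip k : k <= m -> x < v k -> exists2 i, i < k & v i <= x < v i.+1.
  exact: strip.
elim: k => [|k IHk] km xvk; first by rewrite v0 in xvk.
case: (ltnP x (v k)) => [xk | kx]; last by exists k; rewrite ?kx.
by have [i ik strip] := IHk (ltnW km) xk; exists i => //; apply: ltnW.
Qed.

Lemma grid_indexP x i : x < v m -> i < m ->
  (v i <= x < v i.+1) = (grid_index x == i).
Proof.
move=> xm im; case strip: (v i <= x < v i.+1).
  by rewrite (grid_index_eq im strip) eqxx.
have [i0 i0m strip0] := strip_exists xm.
by rewrite (grid_index_eq i0m strip0); apply/esym/negbTE; apply: contraFneq strip => <-.
Qed.

End GridIndex.

Lemma perm_nth_lt s x : is_perm s -> x < size s -> nth 0 s x < size s.
Proof. by move=> sP xs; rewrite -[_ < _](mem_iota 0) -(perm_mem sP) mem_nth. Qed.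

Lemma in_cellE m n (M : 'M[int]_(m, n)) s v h x (i : 'I_m) (j : 'I_n) :
  is_gridding M s v h -> is_perm s -> x < size s ->
  in_cell v h s x i j = (grid_index v m x == i) && (grid_index h n (nth 0 s x) == j).
Proof.
move=> [[v0 [vm v_step]] [[h0 [hn h_step]] _]] sP xs.
by rewrite /in_cell (grid_indexP v0 v_step) ?(grid_indexP h0 h_step) ?vm ?hn ?perm_nth_lt.
Qed.

Lemma finite_recurrent_value (F : finType) (s : nat -> F) :
  exists c, forall N, exists k, (N <= k) && (s k == c).
Proof.
apply: NNPP => none_recurs.
have eventually_avoids c : exists N, forall k, N <= k -> s k != c.
  have /not_all_ex_not[N not_recurs] := not_ex_all_not _ _ none_recurs c.
  exists N => k Nk; apply/negP => skc.
  by apply: not_recurs; exists k; rewrite Nk skc.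
have [N avoids] := choice _ eventually_avoids.
by have /negP[] := avoids (s (\max_c N c)) _ (leq_bigmax _).
Qed.

Lemma unbounded_subseq (P : pred nat) :
  (forall N, exists k, (N <= k) && P k) ->
  exists2 g : nat -> nat, {homo g : i j / i < j} & forall k, P (g k).
Proof.
move=> unbounded; pose next N := xchoose (unbounded N).
have next_ge N : N <= next N by case/andP: (xchooseP (unbounded N)).
have P_next N : P (next N) by case/andP: (xchooseP (unbounded N)).
pose g := fix g k := if k is k'.+1 then next (g k').+1 else next 0.
exists g; last by case=> [|k]; apply: P_next.
by apply: homo_ltn => [y x z | k]; [apply: ltn_trans | apply: next_ge].
Qed.

Lemma wqo_prod_eq (L : Type) (leL : L -> L -> Prop) (F : finType) :
  is_wqo leL -> is_wqo (fun a b : L * F => leL a.1 b.1 /\ a.2 = b.2).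
Proof.
move=> [[le_refl le_trans] le_wqo]; split.
  split=> [// | x y z [xy1 xy2] [yz1 yz2]].
  by split; [apply: le_trans xy1 yz1 | rewrite xy2].
move=> s _; have [c recurs] := finite_recurrent_value (fun k => (s k).2).
have [g g_incr gc] := unbounded_subseq recurs.
have [i [j [ij le_ij]]] := le_wqo (fun k => (s (g k)).1) (fun _ => I).
exists (g i), (g j); split; first exact: g_incr.
by rewrite (eqP (gc i)) (eqP (gc j)).
Qed.

(* Points outside the permutation get the junk index m (resp. n), which is why
   the labels live in 'I_m.+1 * 'I_n.+1. *)
Definition cell_label (m n : nat) (g : gperm) (x : nat) : 'I_m.+1 * 'I_n.+1 :=
  (Ordinal (grid_index_le (gp_v g) m x : _ < m.+1),
   Ordinal (grid_index_le (gp_h g) n (nth 0 (gp_perm g) x) : _ < n.+1)).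

Lemma gridded_emb_cell_label m n (M : 'M[int]_(m, n)) (a b : gperm) f :
  is_gridding M (gp_perm a) (gp_v a) (gp_h a) -> is_perm (gp_perm a) ->
  is_gridding M (gp_perm b) (gp_v b) (gp_h b) -> is_perm (gp_perm b) ->
  pattern_emb (gp_perm a) (gp_perm b) f ->
  (forall x, x < size (gp_perm a) -> cell_label m n a x = cell_label m n b (f x)) ->
  gridded_emb m n a b f.
Proof.
move=> aM aP bM bP f_emb same_cell; split=> // x xa i j.
have fxb : f x < size (gp_perm b) by case: f_emb => _ [+ _]; apply.
rewrite (in_cellE i j aM) // (in_cellE i j bM) //.
by case: (same_cell x xa) => -> ->.
Qed.

Lemma lwqo_of_lwqo_gridded m n (M : 'M[int]_(m, n)) (C : seq nat -> Prop) :
  (forall p, C p -> in_Grid M p) ->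
  lwqo_gridded m n (gridded_class M C) -> lwqo C.
Proof.
move=> C_grid gridded_wqo L leL leL_wqo s sC.
have: forall k, exists vh : (nat -> nat) * (nat -> nat), is_gridding M (s k).1 vh.1 vh.2.
  by move=> k; have [v [h vhM]] := C_grid _ (sC k); exists (v, h).
case/choice=> vh vhM.
pose gs k := (GPerm (s k).1 (vh k).1 (vh k).2, (s k).2).
have [i [j [ij [f [[f_emb _] f_lab]]]]] :=
  gridded_wqo L leL leL_wqo gs (fun k => conj (sC k) (vhM k)).
by exists i, j; split=> //; exists f.
Qed.

Lemma lwqo_gridded_of_lwqo m n (M : 'M[int]_(m, n)) (C : seq nat -> Prop) :
  (forall p, C p -> is_perm p) -> lwqo C -> lwqo_gridded m n (gridded_class M C).
Proof.
move=> C_perm C_wqo L leL leL_wqo s sC.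
pose gs k := (gp_perm (s k).1, fun x => ((s k).2 x, cell_label m n (s k).1 x)).
have [i [j [ij [f [f_emb f_lab]]]]] := C_wqo _ _ (wqo_prod_eq _ leL_wqo) gs (fun k => (sC k).1).
exists i, j; split=> //; exists f; split=> [|x xa]; last by case: (f_lab x xa).
have [[aC aM] [bC bM]] := (sC i, sC j).
apply: (gridded_emb_cell_label aM (C_perm _ aC) bM (C_perm _ bC) f_emb).
by move=> x /f_lab[].
Qed.

Theorem lemma4p7 (m n : nat) (M : 'M[int]_(m, n)) (C : seq nat -> Prop) :
  (forall (i : 'I_m) (j : 'I_n), M i j \in [:: 0%R; 1%R; (-1)%R]) ->
  perm_class C ->
  (forall p, C p -> in_Grid M p) ->
  (lwqo_gridded m n (gridded_class M C) <-> lwqo C).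
Proof.
move=> _ [C_perm _] C_grid; split.
  exact: lwqo_of_lwqo_gridded.
exact: lwqo_gridded_of_lwqo.
Qed.
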